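(* Consider the following procedure (MPO). Let $\pi^1$ be a reference policy with $\pi^1_h(a|s)\ge\underline{\pi}>0$ for all $h,s,a$, let $T\ge1$ and $\beta=\sqrt{\frac{\log\underline{\pi}^{-1}}{TH^2}}$, and for $t=1,\dots,T$ define $$\pi^{t+1}_h(a|s)\ \propto\ \pi^t_h(a|s)\exp\Big[\beta\,\mathbb{E}_{(S',A')\sim d^{\pi^t}_h(\cdot|s_1(s))}Q^{\pi^t,\pi^t}_h(s,a,S',A')\Big].$$ Then there exists a policy $\bar\pi^T$ such that $d^{\bar\pi^T}_h=\frac1T\sum_{t=1}^Td^{\pi^t}_h$ for all $h\in[H]$, and for $T=\frac{16H^4\log\underline{\pi}^{-1}}{\epsilon^2}$ the pair $(\bar\pi^T,\bar\pi^T)$ is an $\epsilon$-approximate Nash equilibrium. Hence this procedure outputs an $\epsilon$-approximate Nash equilibrium after $\frac{16H^4\log\underline{\pi}^{-1}}{\epsilon^2}$ policy updates.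
   Context: Finite-horizon MDP: state space $\mathcal{S}$, action space $\mathcal{A}$, horizon $H$, transition kernel $f$, initial distribution $\nu_1$. Each state $s$ is reachable from a unique initial state, denoted $s_1(s)$. Policies are non-stationary, $\pi=(\pi_h)_{h=1}^H$, $\Pi$ is the set of policies. Pairwise reward $r(s,a,s',a')=\mathbb{P}([s,a]\succ[s',a'])\in[0,1]$ with $r(s,a,s',a')=1-r(s',a',s,a)$. For policies $\pi,\pi'$, trajectories are generated independently from a common initial state $S_1=S'_1\sim\nu_1$: $A_\tau\sim\pi_\tau(\cdot|S_\tau)$, $S_{\tau+1}\sim f(\cdot|S_\tau,A_\tau)$, and similarly for $(S',A')$ under $\pi'$. Define $Q^{\pi,\pi'}_h(s,a,s',a')=\mathbb{E}\big[\sum_{\tau=h}^Hr(S_\tau,A_\tau,S'_\tau,A'_\tau)\mid S_h=s,S'_h=s',A_h=a,A'_h=a'\big]$, $V^{\pi,\pi'}(s,s')=\mathbb{E}\big[\sum_{\tau=1}^Hr(S_\tau,A_\tau,S'_\tau,A'_\tau)\mid S_1=s,S'_1=s'\big]$, and $\langle\nu_1,V^{\pi,\pi'}\rangle=\mathbb{E}_{S_1\sim\nu_1}V^{\pi,\pi'}(S_1,S_1)$. Occupancy measures: $d^\pi_h(s,a)=\Pr(S_h=s,A_h=a)$ and $d^\pi_h(s,a|s_1)=\Pr(S_h=s,A_h=a\mid S_1=s_1)$. A pair $(\pi,\pi)$ is an $\epsilon$-approximate Nash equilibrium if $\langle\nu_1,V^{\pi,\pi}\rangle-\min_{\bar\pi\in\Pi}\langle\nu_1,V^{\pi,\bar\pi}\rangle\le\epsilon$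 and $\max_{\bar\pi\in\Pi}\langle\nu_1,V^{\bar\pi,\pi}\rangle-\langle\nu_1,V^{\pi,\pi}\rangle\le\epsilon$. *)

From mathcomp Require Import all_boot all_order all_algebra.
From mathcomp Require Import reals.
From mathcomp.analysis Require Import sequences exp.
Set Implicit Arguments. Unset Strict Implicit. Unset Printing Implicit Defensive.
Import Order.TTheory GRing.Theory Num.Theory.
Local Open Scope ring_scope.

Section MDP.
Variables (R : realType) (S A : finType) (H : nat).
Variables (f : S -> A -> S -> R)   (* f s a s' = P(S_{h+1} = s' | S_h = s, A_h = a) *)
          (nu1 : S -> R)
          (r : S -> A -> S -> A -> R).

Definition is_mdp : Prop :=
  [/\ (forall s a s', 0 <= f s a s'),
      (forall s a, \sum_s' f s a s' = 1),
      (forall s, 0 <= nu1 s),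
      \sum_s nu1 s = 1 &
      forall s a s' a', 0 <= r s a s' a' <= 1 /\ r s a s' a' = 1 - r s' a' s a].

(* non-stationary policy: pi h s a = pi_h(a|s); only h in [1, H] is used *)
Definition policy := nat -> S -> A -> R.

Definition is_policy (pi : policy) : Prop :=
  forall h, (1 <= h <= H)%N -> forall s,
    (forall a, 0 <= pi h s a) /\ \sum_a pi h s a = 1.

(* sdist pi s1 n s = Pr(S_{n+1} = s | S_1 = s1) under pi *)
Fixpoint sdist (pi : policy) (s1 : S) (n : nat) (s' : S) : R :=
  match n with
  | 0 => (s' == s1)%:R
  | n'.+1 => \sum_s \sum_a sdist pi s1 n' s * pi n s a * f s a s'
  end.

Definition occ_cond (pi : policy) (h : nat) (s1 s : S) (a : A) : R :=
  sdist pi s1 h.-1 s * pi h s a.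

Definition occ (pi : policy) (h : nat) (s : S) (a : A) : R :=
  \sum_s1 nu1 s1 * occ_cond pi h s1 s a.

(* Qrem pi pi' n h = expected sum of the n rewards at steps h, ..., h+n-1,
   the two trajectories evolving independently *)
Fixpoint Qrem (pi pi' : policy) (n h : nat) (s : S) (a : A) (s' : S) (a' : A) : R :=
  match n with
  | 0 => 0
  | n'.+1 => r s a s' a' +
      \sum_x \sum_x' f s a x * f s' a' x' *
        \sum_b \sum_b' pi h.+1 x b * pi' h.+1 x' b' * Qrem pi pi' n' h.+1 x b x' b'
  end.

Definition Qf (pi pi' : policy) (h : nat) : S -> A -> S -> A -> R :=
  Qrem pi pi' (H.+1 - h) h.

Definition Vf (pi pi' : policy) (s s' : S) : R :=
  \sum_a \sum_a' pi 1%N s a * pi' 1%N s' a' * Qf pi pi' 1 s a s' a'.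

Definition nuV (pi pi' : policy) : R := \sum_s nu1 s * Vf pi pi' s s.

Definition is_approx_NE (eps : R) (pi : policy) : Prop :=
  (forall pib, is_policy pib -> nuV pi pi - nuV pi pib <= eps) /\
  (forall pib, is_policy pib -> nuV pib pi - nuV pi pi <= eps).

Definition reachable (s0 s : S) : Prop :=
  exists pi, is_policy pi /\
    exists h, (1 <= h <= H)%N /\ exists a, 0 < occ_cond pi h s0 s a.

Definition unique_initial (s1of : S -> S) : Prop :=
  forall s, 0 < nu1 (s1of s) /\
    (forall s0, 0 < nu1 s0 -> reachable s0 s -> s0 = s1of s).

Definition mpo_gain (s1of : S -> S) (pi : policy) (h : nat) (s : S) (a : A) : R :=
  \sum_s' \sum_a' occ_cond pi h (s1of s) s' a' * Qf pi pi h s a s' a'.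

Definition mpo_step (s1of : S -> S) (beta : R) (pi : policy) : policy :=
  fun h s a =>
    pi h s a * expR (beta * mpo_gain s1of pi h s a) /
    \sum_b pi h s b * expR (beta * mpo_gain s1of pi h s b).

(* mpo s1of beta pi1 n = pi^{n+1} *)
Fixpoint mpo (s1of : S -> S) (beta : R) (pi1 : policy) (n : nat) : policy :=
  match n with
  | 0 => pi1
  | n'.+1 => mpo_step s1of beta (mpo s1of beta pi1 n')
  end.

End MDP.

From mathcomp Require Import all_boot all_order all_algebra.
From mathcomp Require Import reals.
From mathcomp.analysis Require Import sequences exp.
From mathcomp Require Import lra ring zify.

Set Implicit Arguments.
Unset Strict Implicit.
Unset Printing Implicit Defensive.
Import Order.TTheory GRing.Theory Num.Theory.
Local Open Scope ring_scope.

(* At every step h and state s, MPO runs exponential weights (Hedge) on the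
   gains mpo_gain, which lie in [0, H]. By the performance-difference lemma, and
   because each state is reachable from a single initial state, the total regret
   of a comparator q against the iterates splits over steps and states into Hedge
   regrets, each at most ln(1/pimin)/beta + 2 beta T H^2. The policy that mixes the
   iterates in proportion to their state-visitation probabilities has the averaged
   occupancies, so its value against q is the average value. Antisymmetry of the
   preference gives V(p, p) = H/2 and V(p, q) + V(q, p) = H, so both deviation gaps
   of the mixture equal the total regret divided by T, which is at most 3 eps / 4
   for beta = eps / (4 H^3). *)

Section BigSums.
Variable R : comPzRingType.

Lemma sum_pred1_mul (I : finType) (i0 : I) (F : I -> R) :
  \sum_i ((i == i0)%:R * F i) = F i0.
Proof.
rewrite (bigD1 i0) //= eqxx mul1r big1 ?addr0 // => i /negbTE ->.
by rewrite mul0r.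
Qed.

Lemma exchange_big_inner2 (X I J : finType) (F : X -> I -> J -> R) :
  \sum_x \sum_i \sum_j F x i j = \sum_i \sum_j \sum_x F x i j.
Proof. by rewrite exchange_big; apply: eq_bigr => i _; exact: exchange_big. Qed.

Lemma exchange_big_inner4 (X I J K L : finType) (F : X -> I -> J -> K -> L -> R) :
  \sum_x \sum_i \sum_j \sum_k \sum_l F x i j k l =
  \sum_i \sum_j \sum_k \sum_l \sum_x F x i j k l.
Proof.
rewrite exchange_big_inner2; apply: eq_bigr => i _; apply: eq_bigr => j _.
exact: exchange_big_inner2.
Qed.

Lemma sum_mulr_sum_exchange (M I J : finType) (u : I -> R) (v : I -> J -> R)
    (X : M -> I -> J -> R) :
  \sum_m \sum_i u i * (\sum_j v i j * X m i j) =
  \sum_i u i * (\sum_j v i j * \sum_m X m i j).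
Proof.
rewrite exchange_big; apply: eq_bigr => i _; rewrite -mulr_sumr; congr (_ * _).
by rewrite exchange_big; apply: eq_bigr => j _; rewrite -mulr_sumr.
Qed.

Lemma sum2_mulr_sum2_exchange (I J K L : finType) (u : I -> J -> R)
    (v : K -> L -> R) (X : I -> J -> K -> L -> R) :
  \sum_i \sum_j u i j * (\sum_k \sum_l v k l * X i j k l) =
  \sum_k \sum_l v k l * (\sum_i \sum_j u i j * X i j k l).
Proof.
transitivity (\sum_i \sum_j \sum_k \sum_l u i j * (v k l * X i j k l)).
  apply: eq_bigr => i _; apply: eq_bigr => j _; rewrite mulr_sumr.
  by apply: eq_bigr => k _; rewrite mulr_sumr.
under eq_bigr => i _ do rewrite exchange_big_inner2.
rewrite exchange_big_inner2; apply: eq_bigr => k _; apply: eq_bigr => l _.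
rewrite mulr_sumr; apply: eq_bigr => i _; rewrite mulr_sumr.
by apply: eq_bigr => j _; rewrite mulrCA.
Qed.

Lemma sum2_mulr_sum2_avg_exchange (I J K L M : finType) (O : I -> J -> R) (c : R)
    (P : M -> K -> L -> R) (X : I -> J -> K -> L -> R) :
  \sum_i \sum_j O i j * (\sum_k \sum_l (c * \sum_m P m k l) * X i j k l) =
  c * \sum_m \sum_i \sum_j O i j * (\sum_k \sum_l P m k l * X i j k l).
Proof.
transitivity (\sum_i \sum_j \sum_k \sum_l \sum_m c * (O i j * (P m k l * X i j k l))).
  apply: eq_bigr => i _; apply: eq_bigr => j _; rewrite mulr_sumr.
  apply: eq_bigr => k _; rewrite mulr_sumr; apply: eq_bigr => l _.
  by rewrite mulr_sumr mulr_suml mulr_sumr; apply: eq_bigr => m _; ring.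
symmetry; rewrite mulr_sumr.
transitivity (\sum_m \sum_i \sum_j \sum_k \sum_l c * (O i j * (P m k l * X i j k l))).
  apply: eq_bigr => m _; rewrite mulr_sumr; apply: eq_bigr => i _.
  rewrite mulr_sumr; apply: eq_bigr => j _; rewrite !mulr_sumr.
  by apply: eq_bigr => k _; rewrite !mulr_sumr.
exact: exchange_big_inner4.
Qed.

Lemma sum_pair_weights_exchange (I J K L M N : finType) (P : I -> J -> R)
    (Q : K -> L -> R) (F : I -> J -> M -> R) (G : K -> L -> N -> R) (W : M -> N -> R) :
  \sum_i \sum_j P i j * (\sum_k \sum_l Q k l * \sum_x \sum_y F i j x * G k l y * W x y)
  = \sum_x \sum_y (\sum_i \sum_j P i j * F i j x) * (\sum_k \sum_l Q k l * G k l y) * W x y.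
Proof.
pose E i j k l x y := P i j * Q k l * F i j x * G k l y * W x y.
transitivity (\sum_i \sum_j \sum_k \sum_l \sum_x \sum_y E i j k l x y).
  apply: eq_bigr => i _; apply: eq_bigr => j _; rewrite mulr_sumr.
  apply: eq_bigr => k _; rewrite mulr_sumr; apply: eq_bigr => l _.
  rewrite mulrA mulr_sumr; apply: eq_bigr => x _; rewrite mulr_sumr.
  by apply: eq_bigr => y _; rewrite /E !mulrA.
symmetry; transitivity (\sum_x \sum_y \sum_i \sum_j \sum_k \sum_l E i j k l x y).
  apply: eq_bigr => x _; apply: eq_bigr => y _; rewrite !mulr_suml.
  apply: eq_bigr => i _; rewrite !mulr_suml; apply: eq_bigr => j _.
  rewrite mulr_sumr mulr_suml; apply: eq_bigr => k _; rewrite mulr_sumr mulr_suml.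
  by apply: eq_bigr => l _; rewrite /E; ring.
under eq_bigr do rewrite exchange_big_inner4.
exact: exchange_big_inner4.
Qed.

Lemma sum_prod_weights1 (I J : finType) (u : I -> R) (v : J -> R) :
  \sum_i u i = 1 -> \sum_j v j = 1 -> \sum_i \sum_j u i * v j = 1.
Proof.
move=> su sv; under eq_bigr do rewrite -mulr_sumr sv mulr1.
exact: su.
Qed.

End BigSums.

Lemma sum2_convex_bounds (R : numDomainType) (I J : finType) (u X : I -> J -> R) (c : R) :
  (forall i j, 0 <= u i j) -> \sum_i \sum_j u i j = 1 ->
  (forall i j, 0 <= X i j <= c) ->
  0 <= \sum_i \sum_j u i j * X i j <= c.
Proof.
move=> u0 su HX; apply/andP; split.
  apply: sumr_ge0 => i _; apply: sumr_ge0 => j _.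
  by rewrite mulr_ge0 //; case/andP: (HX i j).
apply: (@le_trans _ _ (\sum_i \sum_j u i j * c)).
  apply: ler_sum => i _; apply: ler_sum => j _.
  by rewrite ler_wpM2l //; case/andP: (HX i j).
by under eq_bigr do rewrite -mulr_suml; rewrite -mulr_suml su mul1r.
Qed.

Lemma expR_le_quadratic (R : realType) (x : R) : 0 <= x <= 1/2 -> expR x <= 1 + x + 2 * x ^+ 2.
Proof.
case/andP=> x0 x1; have e0 := expR_gt0 x.
have e1 : 1 - x <= (expR x)^-1 by rewrite -expRN; have := expR_ge1Dx (- x).
have e2 : expR x * (1 - x) <= 1.
  by have := ler_wpM2l (ltW e0) e1; rewrite mulfV // gt_eqF.
have e3 : 1 <= (1 + x + 2 * x ^+ 2) * (1 - x) by nra.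
by rewrite -(@ler_pM2r _ (1 - x)); lra.
Qed.

Section Hedge.
Variables (R : realType) (A : finType).
Variables (w g : nat -> A -> R) (beta pimin Gm : R).
Hypotheses (beta_gt0 : 0 < beta) (pimin_gt0 : 0 < pimin).
Hypotheses (w0_ge : forall a, pimin <= w 0%N a) (w0_sum1 : \sum_a w 0%N a = 1).
Hypothesis g_bounds : forall t a, 0 <= g t a <= Gm.
Hypothesis betaGm_le : beta * Gm <= 1/2.
Hypothesis w_update : forall t a,
  w t.+1 a = w t a * expR (beta * g t a) / \sum_b w t b * expR (beta * g t b).

Let Z t := \sum_b w t b * expR (beta * g t b).

Lemma hedge_normalizer_ge1 t :
  (forall a, 0 < w t a) -> \sum_a w t a = 1 -> 1 <= Z t.
Proof.
move=> wp ws; rewrite -ws; apply: ler_sum => b _; rewrite ler_peMr ?(ltW (wp b)) //.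
apply: le_trans (expR_ge1Dx _); rewrite lerDl mulr_ge0 ?(ltW beta_gt0) //.
by case/andP: (g_bounds t b).
Qed.

Lemma hedge_weights t : (forall a, 0 < w t a) /\ \sum_a w t a = 1.
Proof.
elim: t => [|t [wp ws]]; first by split => // a; apply: (lt_le_trans pimin_gt0 (w0_ge a)).
have Zp : 0 < Z t by exact: lt_le_trans ltr01 (hedge_normalizer_ge1 wp ws).
split => [a|]; first by rewrite w_update divr_gt0 // mulr_gt0 // expR_gt0.
by under eq_bigr do rewrite w_update; rewrite -mulr_suml divff // gt_eqF.
Qed.

Lemma hedge_normalizer_le t :
  Z t <= 1 + beta * \sum_a w t a * g t a + 2 * beta ^+ 2 * Gm ^+ 2.
Proof.
have [wp ws] := hedge_weights t.
set c := 2 * beta ^+ 2 * Gm ^+ 2.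
apply: (@le_trans _ _ (\sum_a w t a * (1 + beta * g t a + c))).
  apply: ler_sum => a _; rewrite ler_wpM2l ?(ltW (wp a)) //.
  case/andP: (g_bounds t a) => g0 g1.
  have x0 : 0 <= beta * g t a by rewrite mulr_ge0 ?(ltW beta_gt0).
  have x1 : beta * g t a <= beta * Gm by rewrite ler_wpM2l ?(ltW beta_gt0).
  have x12 : 0 <= beta * g t a <= 1/2 by apply/andP; split; [lra | have := betaGm_le; lra].
  apply: le_trans (expR_le_quadratic x12) _.
  rewrite /c lerD2l -mulrA ler_wpM2l // -exprMn lerXn2r ?nnegrE //; lra.
under eq_bigr do rewrite !mulrDr mulr1.
rewrite !big_split /= ws -mulr_suml ws mul1r mulr_sumr lerD2r lerD2l.
by under [X in _ <= X]eq_bigr do rewrite mulrCA.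
Qed.

Variable q : A -> R.
Hypotheses (q_ge0 : forall a, 0 <= q a) (q_sum1 : \sum_a q a = 1).

(* Psi t = - KL(q || w t) - entropy(q), hence Psi <= 0 and Psi 0 >= ln pimin. *)
Let Psi t := \sum_a q a * ln (w t a).

Lemma hedge_potential_step t :
  beta * \sum_a (q a - w t a) * g t a <= Psi t.+1 - Psi t + 2 * beta ^+ 2 * Gm ^+ 2.
Proof.
have [wp ws] := hedge_weights t.
have Zp : 0 < Z t by exact: lt_le_trans ltr01 (hedge_normalizer_ge1 wp ws).
have dPsi : Psi t.+1 - Psi t = beta * \sum_a q a * g t a - ln (Z t).
  rewrite /Psi -sumrB.
  transitivity (\sum_a q a * (beta * g t a - ln (Z t))).
    apply: eq_bigr => a _; rewrite -mulrBr; congr (_ * _).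
    rewrite w_update ln_div ?posrE ?mulr_gt0 ?expR_gt0 //.
    by rewrite lnM ?posrE ?expR_gt0 // expRK; ring.
  under eq_bigr do rewrite mulrBr.
  rewrite sumrB -mulr_suml q_sum1 mul1r mulr_sumr; congr (_ - _).
  by apply: eq_bigr => a _; rewrite mulrCA.
have lnZ : ln (Z t) <= Z t - 1.
  by have := @le_ln1Dx R (Z t - 1); rewrite addrCA subrr addr0; apply; have := hedge_normalizer_ge1 wp ws; lra.
have Zle := hedge_normalizer_le t.
rewrite mulr_sumr; under eq_bigr do rewrite mulrBl mulrBr.
rewrite sumrB -!mulr_sumr; lra.
Qed.

Lemma hedge_regret (T : nat) :
  \sum_(t < T) \sum_a (q a - w t a) * g t a <=
    ln (pimin^-1) / beta + 2 * beta * T%:R * Gm ^+ 2.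
Proof.
set c := 2 * beta ^+ 2 * Gm ^+ 2.
have telescoped : beta * \sum_(t < T) \sum_a (q a - w t a) * g t a <= Psi T - Psi 0%N + c *+ T.
  rewrite mulr_sumr -(big_mkord xpredT (fun t => beta * \sum_a (q a - w t a) * g t a)).
  apply: le_trans (ler_sum _ (fun t _ => hedge_potential_step t)) _.
  by rewrite big_split /= telescope_sumr // sumr_const_nat subn0.
have PsiT : Psi T <= 0.
  have [wp ws] := hedge_weights T.
  apply: sumr_le0 => a _; rewrite mulr_ge0_le0 // ln_le0 // -ws (bigD1 a) //= lerDl.
  by apply: sumr_ge0 => b _; apply: ltW.
have Psi0 : ln pimin <= Psi 0%N.
  rewrite -[ln pimin]mul1r -q_sum1 mulr_suml; apply: ler_sum => a _.
  have [wp _] := hedge_weights 0.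
  by rewrite ler_wpM2l // ler_ln ?posrE.
rewrite -(ler_pM2l beta_gt0) mulrDr mulrCA divff ?gt_eqF // mulr1 lnV ?posrE //.
have -> : beta * (2 * beta * T%:R * Gm ^+ 2) = c *+ T by rewrite /c -mulr_natr; ring.
lra.
Qed.

End Hedge.

Section MDP.
Variables (R : realType) (S A : finType) (H : nat).
Variables (f : S -> A -> S -> R) (nu1 : S -> R) (r : S -> A -> S -> A -> R).
Hypothesis mdp : is_mdp f nu1 r.

Lemma trans_ge0 s a x : 0 <= f s a x. Proof. by case: mdp. Qed.
Lemma trans_sum1 s a : \sum_x f s a x = 1. Proof. by case: mdp. Qed.
Lemma nu1_ge0 s : 0 <= nu1 s. Proof. by case: mdp. Qed.
Lemma nu1_sum1 : \sum_s nu1 s = 1. Proof. by case: mdp. Qed.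

Lemma reward_bounds s a s' a' : 0 <= r s a s' a' <= 1.
Proof. by case: mdp => _ _ _ _ /(_ s a s' a') []. Qed.

Lemma reward_addC s a s' a' : r s a s' a' + r s' a' s a = 1.
Proof. by case: mdp => _ _ _ _ /(_ s a s' a') [] _ ->; rewrite subrK. Qed.

Lemma policy_ge0 (p : policy R S A) h :
  is_policy H p -> (0 < h <= H)%N -> forall s a, 0 <= p h s a.
Proof. by move=> Hp hH s; case: (Hp h hH s). Qed.

Lemma policy_sum1 (p : policy R S A) h :
  is_policy H p -> (0 < h <= H)%N -> forall s, \sum_a p h s a = 1.
Proof. by move=> Hp hH s; case: (Hp h hH s). Qed.

Lemma sdist_ge0 p s1 n s : is_policy H p -> (n <= H)%N -> 0 <= sdist f p s1 n s.
Proof.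
move=> Hp; elim: n s => [|n IH] s Hn /=; first by rewrite ler0n.
apply: sumr_ge0 => x _; apply: sumr_ge0 => a _.
by rewrite !mulr_ge0 ?trans_ge0 ?IH ?(ltnW Hn) ?(policy_ge0 Hp) ?ltn0Sn.
Qed.

Lemma sdist_sum1 p s1 n : is_policy H p -> (n <= H)%N -> \sum_s sdist f p s1 n s = 1.
Proof.
move=> Hp; elim: n => [|n IH] Hn /=.
  by rewrite (bigD1 s1) //= eqxx big1 ?addr0 // => s /negbTE ->.
rewrite exchange_big /= -(IH (ltnW Hn)); apply: eq_bigr => s _.
rewrite exchange_big /=.
under eq_bigr do rewrite -mulr_sumr trans_sum1 mulr1.
by rewrite -mulr_sumr (policy_sum1 Hp) ?mulr1.
Qed.

Lemma occ_cond_ge0 p h s1 s a :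
  is_policy H p -> (0 < h <= H)%N -> 0 <= occ_cond f p h s1 s a.
Proof.
move=> Hp /andP [h0 hH]; rewrite /occ_cond mulr_ge0 ?(policy_ge0 Hp) ?h0 //.
by rewrite sdist_ge0 // (leq_trans (leq_pred _) hH).
Qed.

Lemma occ_cond_sum1 p h s1 :
  is_policy H p -> (0 < h <= H)%N -> \sum_s \sum_a occ_cond f p h s1 s a = 1.
Proof.
move=> Hp /andP [h0 hH]; rewrite /occ_cond.
under eq_bigr do rewrite -mulr_sumr (policy_sum1 Hp) ?h0 // mulr1.
by rewrite sdist_sum1 // (leq_trans (leq_pred _) hH).
Qed.

Lemma Qrem_bounds p q n h s a s' a' : is_policy H p -> is_policy H q ->
  (h + n <= H.+1)%N -> 0 <= Qrem f r p q n h s a s' a' <= n%:R.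
Proof.
move=> Hp Hq; elim: n h s a s' a' => [|n IH] h s a s' a' Hn /=; first by rewrite lexx.
have /andP [r0 r1] := reward_bounds s a s' a'.
case: n IH Hn => [|n] IH Hn.
  rewrite (eq_bigr (fun _ => 0)) ?big1 ?addr0 ?r0 // => x _.
  rewrite big1 // => x' _; rewrite big1 ?mulr0 // => b _.
  by rewrite big1 // => b' _; rewrite mulr0.
have hH : (0 < h.+1 <= H)%N by lia.
have /andP [c0 c1] : 0 <= \sum_x \sum_x' f s a x * f s' a' x' * \sum_b \sum_b' p h.+1 x b *
    q h.+1 x' b' * Qrem f r p q n.+1 h.+1 x b x' b' <= n.+1%:R.
  apply: sum2_convex_bounds => [x x'|| x x'].
  - by rewrite mulr_ge0 ?trans_ge0.
  - by rewrite sum_prod_weights1 ?trans_sum1.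
  apply: sum2_convex_bounds => [b b'|| b b'].
  - by rewrite mulr_ge0 ?(policy_ge0 Hp) ?(policy_ge0 Hq).
  - by rewrite sum_prod_weights1 ?(policy_sum1 Hp) ?(policy_sum1 Hq).
  by apply: IH; lia.
by rewrite -natr1; apply/andP; split; lra.
Qed.

Lemma Qf_recE p q h s a s' a' : (h <= H)%N ->
  Qf H f r p q h s a s' a' = r s a s' a' + \sum_x \sum_x' f s a x * f s' a' x' *
     \sum_b \sum_b' p h.+1 x b * q h.+1 x' b' * Qf H f r p q h.+1 x b x' b'.
Proof. by move=> hH; rewrite /Qf subSS subSn. Qed.

Lemma Qf_last p q s a s' a' : Qf H f r p q H.+1 s a s' a' = 0.
Proof. by rewrite /Qf subnn. Qed.

Lemma Qf_bounds p q h s a s' a' : is_policy H p -> is_policy H q -> (0 < h <= H)%N ->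
  0 <= Qf H f r p q h s a s' a' <= H%:R.
Proof.
move=> Hp Hq hH; have hn : (h + (H.+1 - h) <= H.+1)%N by lia.
case/andP: (Qrem_bounds s a s' a' Hp Hq hn) => -> /le_trans; apply.
by rewrite ler_nat; lia.
Qed.

(* mpo_gain s1of pi h s a is Qavg pi pi h (s1of s) s a. *)
Definition Qavg (pi q : policy R S A) h s1 s a :=
  \sum_s' \sum_a' occ_cond f q h s1 s' a' * Qf H f r pi q h s a s' a'.

(* Value against q of the player who follows p before step h, w at step h and
   pi from step h + 1 on, counting only the rewards from step h on. *)
Definition switch_value (p w pi q : policy R S A) h :=
  \sum_s1 nu1 s1 * \sum_s \sum_a sdist f p s1 h.-1 s * w h s a * Qavg pi q h s1 s a.

Definition step_reward (p q : policy R S A) h :=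
  \sum_s1 nu1 s1 * \sum_s \sum_a occ_cond f p h s1 s a *
     \sum_s' \sum_a' occ_cond f q h s1 s' a' * r s a s' a'.

Lemma switch_value_step p pi q h : (0 < h <= H)%N ->
  switch_value p p pi q h = step_reward p q h + switch_value p pi pi q h.+1.
Proof.
case: h => // h /andP [_ hH].
rewrite /switch_value /step_reward -big_split /=; apply: eq_bigr => s1 _.
rewrite -mulrDr; congr (_ * _).
transitivity (\sum_s \sum_a occ_cond f p h.+1 s1 s a *
     (\sum_s' \sum_a' occ_cond f q h.+1 s1 s' a' * r s a s' a') +
   \sum_s \sum_a occ_cond f p h.+1 s1 s a * (\sum_s' \sum_a' occ_cond f q h.+1 s1 s' a' *
     \sum_x \sum_x' f s a x * f s' a' x' *
     \sum_b \sum_b' pi h.+2 x b * q h.+2 x' b' * Qf H f r pi q h.+2 x b x' b')).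
  rewrite -big_split; apply: eq_bigr => s _; rewrite -big_split; apply: eq_bigr => a _.
  rewrite /occ_cond /= -mulrDr; congr (_ * _); rewrite /Qavg -big_split.
  apply: eq_bigr => s' _; rewrite -big_split; apply: eq_bigr => a' _.
  by rewrite Qf_recE // mulrDr.
congr (_ + _); rewrite sum_pair_weights_exchange; apply: eq_bigr => x _.
rewrite /Qavg /occ_cond /=.
transitivity (\sum_x' \sum_b \sum_b' sdist f p s1 h.+1 x * pi h.+2 x b *
   (sdist f q s1 h.+1 x' * q h.+2 x' b' * Qf H f r pi q h.+2 x b x' b')).
  apply: eq_bigr => x' _; rewrite mulr_sumr; apply: eq_bigr => b _.
  by rewrite mulr_sumr; apply: eq_bigr => b' _ /=; ring.
rewrite exchange_big; apply: eq_bigr => b _; rewrite mulr_sumr.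
by apply: eq_bigr => x' _; rewrite mulr_sumr.
Qed.

Lemma switch_value_last p w pi q : switch_value p w pi q H.+1 = 0.
Proof.
rewrite /switch_value big1 // => s1 _; rewrite big1 ?mulr0 // => s _.
rewrite big1 // => a _; rewrite /Qavg big1 ?mulr0 // => s' _.
by rewrite big1 // => a' _; rewrite Qf_last mulr0.
Qed.

Lemma switch_value_first p pi q : switch_value p pi pi q 1 = nuV H f nu1 r pi q.
Proof.
rewrite /switch_value /nuV; apply: eq_bigr => s1 _; congr (_ * _); rewrite /Vf /=.
under eq_bigr do under eq_bigr do rewrite -mulrA.
under eq_bigr do rewrite -mulr_sumr.
rewrite sum_pred1_mul; apply: eq_bigr => a _; rewrite /Qavg /occ_cond /=.
under eq_bigr do under eq_bigr do rewrite -mulrA.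
under eq_bigr do rewrite -mulr_sumr.
by rewrite sum_pred1_mul mulr_sumr; apply: eq_bigr => a' _; rewrite mulrA.
Qed.

Lemma switch_value_telescope p pi q :
  \sum_(1 <= h < H.+1) (switch_value p p pi q h - switch_value p pi pi q h) =
  \sum_(1 <= h < H.+1) step_reward p q h - nuV H f nu1 r pi q.
Proof.
transitivity (\sum_(1 <= h < H.+1) (step_reward p q h +
    (switch_value p pi pi q h.+1 - switch_value p pi pi q h))).
  by rewrite !big_nat; apply: eq_bigr => h hH; rewrite switch_value_step // addrA.
by rewrite big_split /= telescope_sumr // switch_value_last sub0r switch_value_first.
Qed.

Lemma nuV_step_rewards p q : nuV H f nu1 r p q = \sum_(1 <= h < H.+1) step_reward p q h.
Proof.
have := switch_value_telescope p p q; rewrite big1 => [|h _]; last by rewrite subrr.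
by move/eqP; rewrite eq_sym subr_eq0 => /eqP.
Qed.

Lemma performance_difference p pi q : nuV H f nu1 r p q - nuV H f nu1 r pi q =
  \sum_(1 <= h < H.+1) (switch_value p p pi q h - switch_value p pi pi q h).
Proof. by rewrite switch_value_telescope nuV_step_rewards. Qed.

Lemma step_reward_ge0 p q h : is_policy H p -> is_policy H q -> (0 < h <= H)%N ->
  0 <= step_reward p q h.
Proof.
move=> Hp Hq hH; apply: sumr_ge0 => s1 _; rewrite mulr_ge0 ?nu1_ge0 //.
apply: sumr_ge0 => s _; apply: sumr_ge0 => a _; rewrite mulr_ge0 ?occ_cond_ge0 //.
apply: sumr_ge0 => s' _; apply: sumr_ge0 => a' _; rewrite mulr_ge0 ?occ_cond_ge0 //.
by case/andP: (reward_bounds s a s' a').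
Qed.

Lemma step_reward_addC p q h : is_policy H p -> is_policy H q -> (0 < h <= H)%N ->
  step_reward p q h + step_reward q p h = 1.
Proof.
move=> Hp Hq hH; rewrite /step_reward -big_split /= -nu1_sum1.
apply: eq_bigr => s1 _; rewrite -mulrDr -[RHS]mulr1; congr (_ * _).
rewrite [X in _ + X](sum2_mulr_sum2_exchange (occ_cond f q h s1)) -big_split /=.
rewrite -(occ_cond_sum1 s1 Hp hH); apply: eq_bigr => s _; rewrite -big_split /=.
apply: eq_bigr => a _; rewrite -mulrDr -[RHS]mulr1; congr (_ * _).
rewrite -big_split -(occ_cond_sum1 s1 Hq hH); apply: eq_bigr => s' _.
by rewrite -big_split /=; apply: eq_bigr => a' _; rewrite -mulrDr reward_addC mulr1.
Qed.

Lemma nuV_ge0 p q : is_policy H p -> is_policy H q -> 0 <= nuV H f nu1 r p q.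
Proof.
move=> Hp Hq; rewrite nuV_step_rewards big_nat; apply: sumr_ge0 => h hH.
exact: step_reward_ge0.
Qed.

Lemma nuV_addC p q : is_policy H p -> is_policy H q ->
  nuV H f nu1 r p q + nuV H f nu1 r q p = H%:R.
Proof.
move=> Hp Hq; rewrite !nuV_step_rewards -big_split /= big_nat.
rewrite (eq_bigr (fun _ => 1)) => [|h hH]; last exact: step_reward_addC.
by rewrite -big_nat sumr_const_nat subn1.
Qed.

Lemma nuV_self p : is_policy H p -> nuV H f nu1 r p p = H%:R / 2.
Proof. by move=> Hp; have := nuV_addC Hp Hp; lra. Qed.

Lemma approx_NE_of_deviation_le p eps : is_policy H p ->
  (forall q, is_policy H q -> nuV H f nu1 r q p - H%:R / 2 <= eps) ->
  is_approx_NE H f nu1 r eps p.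
Proof.
move=> Hp dev; have := nuV_self Hp.
by split=> q Hq; have := dev q Hq; have := nuV_addC Hp Hq; lra.
Qed.

Lemma exp_reweight_policy (pi : policy R S A) (beta : R) (g : nat -> S -> A -> R) :
  is_policy H pi -> is_policy H (fun h s a =>
    pi h s a * expR (beta * g h s a) / \sum_b pi h s b * expR (beta * g h s b)).
Proof.
move=> Hp h hH s.
have t0 b : 0 <= pi h s b * expR (beta * g h s b).
  by rewrite mulr_ge0 ?(policy_ge0 Hp) // ltW // expR_gt0.
have Zne0 : \sum_b pi h s b * expR (beta * g h s b) != 0.
  apply/eqP => /(psumr_eq0P (fun b _ => t0 b)) all0.
  suff : \sum_b pi h s b = 0 by rewrite (policy_sum1 Hp) // => /eqP; rewrite oner_eq0.
  apply: big1 => b _; have /eqP := all0 b isT; rewrite mulf_eq0 => /orP [/eqP //|].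
  by rewrite gt_eqF // expR_gt0.
split => [a|]; first by rewrite divr_ge0 ?sumr_ge0.
by rewrite -mulr_suml divff.
Qed.

Variable s1of : S -> S.

Lemma mpo_policy beta pi1 n : is_policy H pi1 -> is_policy H (mpo H f r s1of beta pi1 n).
Proof. by move=> Hp; elim: n => [|n IH] //=; exact: exp_reweight_policy. Qed.

Hypothesis initial_unique : unique_initial H f nu1 s1of.

Lemma sdist_off_initial p h s1 s : is_policy H p -> (0 < h <= H)%N -> 0 < nu1 s1 ->
  s1 != s1of s -> sdist f p s1 h.-1 s = 0.
Proof.
move=> Hp hH nu_s1 ne.
have ge0 : 0 <= sdist f p s1 h.-1 s.
  by case/andP: hH => _ hH; rewrite sdist_ge0 // (leq_trans (leq_pred _) hH).
apply/eqP; rewrite eq_le ge0 andbT leNgt; apply/negP => reach.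
have [a pa] : exists a, 0 < p h s a.
  apply/existsP; apply: contraT; rewrite negb_exists => /forallP all0.
  suff : \sum_a p h s a = 0 by rewrite (policy_sum1 Hp) // => /eqP; rewrite oner_eq0.
  apply: big1 => a _; apply/eqP; rewrite eq_le (policy_ge0 Hp) // andbT.
  by rewrite leNgt all0.
suff e : s1 = s1of s by rewrite e eqxx in ne.
apply: (proj2 (initial_unique s)) nu_s1 _; exists p; split => //; exists h; split => //.
by exists a; rewrite /occ_cond mulr_gt0.
Qed.

Section Mixture.
Variables (beta : R) (pi1 : policy R S A) (T : nat).
Hypotheses (pi1_policy : is_policy H pi1) (T_gt0 : (0 < T)%N).

Let pis t := mpo H f r s1of beta pi1 t.

Let pis_policy t : is_policy H (pis t). Proof. exact: mpo_policy. Qed.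

Definition mixture_weight h s := \sum_(t < T) sdist f (pis t) (s1of s) h.-1 s.

(* The fallback pi1 only matters on states that no iterate reaches at step h. *)
Definition mixture_policy : policy R S A := fun h s a =>
  if mixture_weight h s == 0 then pi1 h s a
  else (\sum_(t < T) sdist f (pis t) (s1of s) h.-1 s * pis t h s a) / mixture_weight h s.

Lemma mixture_policy_is_policy : is_policy H mixture_policy.
Proof.
move=> h hH s; rewrite /mixture_policy; case: eqP => [_|wne0]; first exact: pi1_policy.
have hH' : (h.-1 <= H)%N by case/andP: hH => _; apply: leq_trans (leq_pred _).
split => [a|].
  rewrite divr_ge0 ?sumr_ge0 // => t _; last by rewrite sdist_ge0.
  by rewrite mulr_ge0 ?sdist_ge0 ?(policy_ge0 (pis_policy t)).
rewrite -mulr_suml exchange_big /=.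
under eq_bigr do rewrite -mulr_sumr (policy_sum1 (pis_policy _)) // mulr1.
by rewrite divff //; apply/eqP.
Qed.

Lemma sdist_mul_mixture h s1 s a : (0 < h <= H)%N -> 0 < nu1 s1 ->
  \sum_(t < T) sdist f (pis t) s1 h.-1 s * mixture_policy h s a =
  \sum_(t < T) sdist f (pis t) s1 h.-1 s * pis t h s a.
Proof.
move=> hH nu_s1; have hH' : (h.-1 <= H)%N.
  by case/andP: hH => _; apply: leq_trans (leq_pred _).
have [->|ne] := eqVneq s1 (s1of s); last first.
  by rewrite !big1 // => t _; rewrite sdist_off_initial ?mul0r.
rewrite -mulr_suml -/(mixture_weight h s) /mixture_policy; case: eqP => [w0|wne0].
  rewrite w0 mul0r; symmetry; apply: big1 => t _.
  have sdist_ge0t (t' : 'I_T) (_ : true) := sdist_ge0 (s1of s) s (pis_policy t') hH'.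
  by rewrite (psumr_eq0P sdist_ge0t w0) ?mul0r.
by rewrite mulrC divfK //; apply/eqP.
Qed.

Lemma sdist_mixture n s1 x : (n <= H)%N -> 0 < nu1 s1 ->
  T%:R * sdist f mixture_policy s1 n x = \sum_(t < T) sdist f (pis t) s1 n x.
Proof.
move=> + nu_s1; elim: n x => [|n IH] x hn /=.
  by rewrite sumr_const card_ord mulr_natl.
rewrite mulr_sumr.
transitivity (\sum_s \sum_a \sum_(t < T) sdist f (pis t) s1 n s * pis t n.+1 s a * f s a x).
  apply: eq_bigr => s _; rewrite mulr_sumr; apply: eq_bigr => a _.
  by rewrite !mulrA IH ?(ltnW hn) // mulr_suml (@sdist_mul_mixture n.+1) ?mulr_suml.
by rewrite [RHS]exchange_big_inner2.
Qed.

Let T_neq0 : T%:R != 0 :> R. Proof. by rewrite pnatr_eq0 -lt0n. Qed.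

Lemma occ_cond_mixture h s1 s a : (0 < h <= H)%N -> 0 < nu1 s1 ->
  occ_cond f mixture_policy h s1 s a = T%:R^-1 * \sum_(t < T) occ_cond f (pis t) h s1 s a.
Proof.
move=> hH nu_s1; have hH' : (h.-1 <= H)%N.
  by case/andP: hH => _; apply: leq_trans (leq_pred _).
rewrite /occ_cond -[sdist _ _ _ _ _](mulKf T_neq0) sdist_mixture //.
by rewrite -mulrA mulr_suml sdist_mul_mixture.
Qed.

Lemma sum_nu1_avg (F : S -> R) (G : 'I_T -> S -> R) :
  (forall s1, 0 < nu1 s1 -> F s1 = T%:R^-1 * \sum_(t < T) G t s1) ->
  \sum_s1 nu1 s1 * F s1 = T%:R^-1 * \sum_(t < T) \sum_s1 nu1 s1 * G t s1.
Proof.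
move=> FG; rewrite exchange_big mulr_sumr; apply: eq_bigr => s1 _.
have [<-|nu_s1] := eqVneq 0 (nu1 s1); first by rewrite !mul0r big1 ?mulr0 // => t _; rewrite mul0r.
by rewrite FG ?lt_neqAle ?nu_s1 ?nu1_ge0 // mulrCA mulr_sumr.
Qed.

Lemma occ_mixture h s a : (0 < h <= H)%N ->
  occ f nu1 mixture_policy h s a = T%:R^-1 * \sum_(t < T) occ f nu1 (pis t) h s a.
Proof. by move=> hH; apply: sum_nu1_avg => s1 nu_s1; rewrite occ_cond_mixture. Qed.

Lemma step_reward_mixture q h : (0 < h <= H)%N ->
  step_reward q mixture_policy h = T%:R^-1 * \sum_(t < T) step_reward q (pis t) h.
Proof.
move=> hH; apply: sum_nu1_avg => s1 nu_s1.
under eq_bigr do under eq_bigr do under eq_bigr do under eq_bigr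
  do rewrite occ_cond_mixture //.
exact: sum2_mulr_sum2_avg_exchange.
Qed.

Lemma nuV_mixture q :
  nuV H f nu1 r q mixture_policy = T%:R^-1 * \sum_(t < T) nuV H f nu1 r q (pis t).
Proof.
rewrite nuV_step_rewards big_nat.
rewrite (eq_bigr (fun h => T%:R^-1 * \sum_(t < T) step_reward q (pis t) h)) => [|h hH].
  rewrite -big_nat -mulr_sumr exchange_big /=.
  by congr (_ * _); apply: eq_bigr => t _; rewrite nuV_step_rewards.
exact: step_reward_mixture.
Qed.

Lemma mixture_deviation_gain q : is_policy H q ->
  nuV H f nu1 r q mixture_policy - H%:R / 2 =
  T%:R^-1 * \sum_(t < T) (nuV H f nu1 r q (pis t) - nuV H f nu1 r (pis t) (pis t)).
Proof.
move=> Hq; rewrite nuV_mixture.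
under [in RHS]eq_bigr do rewrite (nuV_self (pis_policy _)).
rewrite sumrB sumr_const card_ord mulrBr -[(H%:R / 2) *+ T]mulr_natl mulKf //.
Qed.

Lemma mpo_gain_bounds t h s a : (0 < h <= H)%N ->
  0 <= mpo_gain H f r s1of (pis t) h s a <= H%:R.
Proof.
move=> hH; apply: sum2_convex_bounds => [s' a'|| s' a'].
- by rewrite occ_cond_ge0.
- by rewrite occ_cond_sum1.
- by rewrite Qf_bounds.
Qed.

(* From an initial state other than s1of s the state s is never visited, which is
   why mpo_gain may condition the opponent's occupancy on s1of s. *)
Lemma switch_value_gap q t h : is_policy H q -> (0 < h <= H)%N ->
  switch_value q q (pis t) (pis t) h - switch_value q (pis t) (pis t) (pis t) h =
  \sum_s1 nu1 s1 * (\sum_s sdist f q s1 h.-1 s *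
     \sum_a (q h s a - pis t h s a) * mpo_gain H f r s1of (pis t) h s a).
Proof.
move=> Hq hH; rewrite /switch_value -sumrB; apply: eq_bigr => s1 _; rewrite -mulrBr.
have [<-|nu_s1] := eqVneq 0 (nu1 s1); first by rewrite !mul0r.
have {}nu_s1 : 0 < nu1 s1 by rewrite lt_neqAle nu_s1 nu1_ge0.
congr (_ * _); rewrite -sumrB; apply: eq_bigr => s _; rewrite -sumrB.
have [->|ne] := eqVneq s1 (s1of s).
  by rewrite mulr_sumr; apply: eq_bigr => a _; rewrite -mulrBl -mulrBr -mulrA.
rewrite sdist_off_initial // mul0r big1 // => a _.
by rewrite !mul0r subrr.
Qed.

Lemma mpo_regret_le q pimin : is_policy H q -> 0 < beta -> beta * H%:R <= 1 / 2 ->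
  0 < pimin -> (forall h, (1 <= h <= H)%N -> forall s a, pimin <= pi1 h s a) ->
  \sum_(t < T) (nuV H f nu1 r q (pis t) - nuV H f nu1 r (pis t) (pis t)) <=
  H%:R * (ln (pimin^-1) / beta + 2 * beta * T%:R * H%:R ^+ 2).
Proof.
move=> Hq beta_gt0 betaH pimin_gt0 pi1_ge; set C := ln _ / beta + _.
under eq_bigr do rewrite performance_difference.
rewrite exchange_big /=; apply: (@le_trans _ _ (\sum_(1 <= h < H.+1) C)); last first.
  by rewrite sumr_const_nat subn1 mulr_natl.
rewrite !big_nat; apply: ler_sum => h /andP [h_gt0 h_le]; rewrite ltnS in h_le.
have hH : (0 < h <= H)%N by rewrite h_gt0.
have hH' : (h.-1 <= H)%N by apply: leq_trans (leq_pred _) h_le.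
under eq_bigr do rewrite switch_value_gap //.
rewrite sum_mulr_sum_exchange.
apply: (@le_trans _ _ (\sum_s1 nu1 s1 * (\sum_s sdist f q s1 h.-1 s * C))).
  apply: ler_sum => s1 _; rewrite ler_wpM2l ?nu1_ge0 //.
  apply: ler_sum => s _; rewrite ler_wpM2l ?sdist_ge0 //.
  apply: (@hedge_regret _ _ (fun t a => pis t h s a)
    (fun t a => mpo_gain H f r s1of (pis t) h s a)) => //.
  - by move=> a; apply: pi1_ge.
  - exact: policy_sum1.
  - by move=> t a; apply: mpo_gain_bounds.
  - exact: policy_ge0.
  - exact: policy_sum1.
under eq_bigr do rewrite -mulr_suml sdist_sum1 // mul1r.
by rewrite -mulr_suml nu1_sum1 mul1r.
Qed.

Lemma mixture_deviation_le q pimin eps : is_policy H q ->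
  0 < pimin -> (forall h, (1 <= h <= H)%N -> forall s a, pimin <= pi1 h s a) ->
  0 < eps -> (0 < H)%N -> 0 < ln (pimin^-1) ->
  T%:R = 16 * H%:R ^+ 4 * ln (pimin^-1) / eps ^+ 2 -> beta = eps / (4 * H%:R ^+ 3) ->
  nuV H f nu1 r q mixture_policy - H%:R / 2 <= eps.
Proof.
move=> Hq pimin_gt0 pi1_ge eps_gt0 H_gt0 L_gt0 T_eq beta_eq.
have [eps_large|eps_small] := lerP (H%:R / 2) eps.
  have := nuV_ge0 mixture_policy_is_policy Hq.
  by have := nuV_addC Hq mixture_policy_is_policy; lra.
have H_ge1 : 1 <= H%:R :> R by rewrite ler1n.
have beta_gt0 : 0 < beta by rewrite beta_eq divr_gt0 // mulr_gt0 // exprn_gt0 //; lra.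
have betaH : beta * H%:R <= 1 / 2.
  have -> : beta * H%:R = eps / (4 * H%:R ^+ 2).
    by rewrite beta_eq; field; apply/negP => /eqP; lra.
  rewrite ler_pdivrMr ?mulr_gt0 ?exprn_gt0 //; try lra.
  have : H%:R <= H%:R ^+ 2 :> R by rewrite expr2 ler_peMr //; lra.
  lra.
rewrite mixture_deviation_gain //.
apply: le_trans (ler_wpM2l _ (mpo_regret_le Hq beta_gt0 betaH pimin_gt0 pi1_ge)) _.
  by rewrite invr_ge0 ler0n.
(* beta balances the two Hedge terms: each step contributes 12 H^3 ln(1/pimin) / eps. *)
have -> : T%:R^-1 * (H%:R * (ln (pimin^-1) / beta + 2 * beta * T%:R * H%:R ^+ 2)) =
    3 / 4 * eps.
  by rewrite beta_eq T_eq; field; apply/and3P; split; apply/negP => /eqP; lra.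
lra.
Qed.

End Mixture.
End MDP.

Lemma mpo_beta_eq (R : realType) (H T : nat) (L eps : R) :
  (0 < H)%N -> (0 < T)%N -> 0 < eps -> T%:R = 16 * H%:R ^+ 4 * L / eps ^+ 2 ->
  0 < L /\ Num.sqrt (L / (T%:R * H%:R ^+ 2)) = eps / (4 * H%:R ^+ 3).
Proof.
move=> H_gt0 T_gt0 eps_gt0 T_eq.
have T_ge1 : 1 <= T%:R :> R by rewrite ler1n.
have H_ge1 : 1 <= H%:R :> R by rewrite ler1n.
have L_gt0 : 0 < L.
  rewrite ltNge; apply/negP => L_le0; suff : T%:R <= 0 :> R by lra.
  rewrite T_eq; apply: mulr_le0_ge0; last by rewrite invr_ge0 exprn_ge0 // ltW.
  by apply: mulr_ge0_le0 => //; rewrite mulr_ge0 // exprn_ge0 //; lra.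
split => //; have -> : L / (T%:R * H%:R ^+ 2) = (eps / (4 * H%:R ^+ 3)) ^+ 2.
  by rewrite T_eq; field; apply/and3P; split; apply/negP => /eqP; lra.
by rewrite sqrtr_sqr ger0_norm // divr_ge0 ?mulr_ge0 ?exprn_ge0 //; lra.
Qed.

Theorem theorem5 (R : realType) (S A : finType) (H : nat)
    (f : S -> A -> S -> R) (nu1 : S -> R) (r : S -> A -> S -> A -> R)
    (s1of : S -> S) (pi1 : policy R S A) (pimin : R) :
  (0 < H)%N ->
  is_mdp f nu1 r ->
  unique_initial H f nu1 s1of ->
  is_policy H pi1 ->
  0 < pimin ->
  (forall h, (1 <= h <= H)%N -> forall s a, pimin <= pi1 h s a) ->
  forall T : nat, (1 <= T)%N ->
  let beta := Num.sqrt (ln (pimin^-1) / (T%:R * H%:R ^+ 2)) in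
  let pit := fun t : nat => mpo H f r s1of beta pi1 t.-1 in
  exists pibar : policy R S A,
    [/\ is_policy H pibar,
        (forall h, (1 <= h <= H)%N -> forall s a,
           occ f nu1 pibar h s a = T%:R^-1 * \sum_(1 <= t < T.+1) occ f nu1 (pit t) h s a) &
        forall eps : R, 0 < eps ->
          T%:R = 16 * H%:R ^+ 4 * ln (pimin^-1) / eps ^+ 2 ->
          is_approx_NE H f nu1 r eps pibar].
Proof.
move=> H_gt0 mdp uniq pi1_policy pimin_gt0 pi1_ge T T_gt0 beta pit.
exists (mixture_policy H f r s1of beta pi1 T).
have mix_policy := mixture_policy_is_policy mdp s1of beta T pi1_policy.
split => // [h hH s a|eps eps_gt0 T_eq].
  by rewrite (occ_mixture mdp uniq) // big_add1 big_mkord.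
have [L_gt0 beta_eq] := mpo_beta_eq H_gt0 T_gt0 eps_gt0 T_eq.
apply: (approx_NE_of_deviation_le mdp mix_policy) => q Hq.
exact: (mixture_deviation_le mdp uniq pi1_policy T_gt0 Hq pimin_gt0 pi1_ge
  eps_gt0 H_gt0 L_gt0 T_eq beta_eq).
Qed.
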